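(* For every $A>0$ there is a constant $\kappa(A)>0$, depending only on $A$, such that for diffusive deposition, every $N$, every $\sigma\in\mathcal X_e(A)$ and every $i\in G_N$, $$P\big(\text{explorer attaches to pile } i\,\big|\,\sigma\big)\ge\kappa(A)\frac{\sigma_i^2}{N}.$$
   Context: Diffusive deposition: for $N\ge2$, $G_N=\{1,\dots,N\}$, a configuration $\sigma\in\mathbb N^N$ gives column (pile) heights. Given $\sigma$, an explorer is a walk $(X_n,Z_n)_{n\ge0}$ with $(X_n)$ i.i.d. uniform on $G_N$, $Z_0=\max_i\sigma_i+1$, and $(Z_{n+1}-Z_n)$ i.i.d. uniform on $\{-1,1\}$ independent of $(X_n)$. With $n^*=\inf\{n:Z_n\le\sigma_{X_n}\}$, the explorer attaches to pile $X_{n^*}$. The early regime is $\mathcal X_e(A)=\{\sigma\in\mathbb N^N:\ \sum_{i=1}^N\sigma_i^2\le AN,\ \sum_{i=1}^N\sigma_i<N/2\}$. *)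

From Stdlib Require Import Reals Lra Lia ZArith.
Open Scope R_scope.

(* Piles are indexed by G_N = {1,...,N}; a configuration is sigma : nat -> nat,
   of which only the values sigma 1, ..., sigma N matter. *)

Fixpoint sum1N (f : nat -> R) (N : nat) : R :=
  match N with
  | O => 0
  | S n => sum1N f n + f (S n)
  end.

Fixpoint maxh (sigma : nat -> nat) (N : nat) : nat :=
  match N with
  | O => 0%nat
  | S n => Nat.max (maxh sigma n) (sigma (S n))
  end.

(* #{ j in G_N : sigma_j < z } : number of piles above which height z is free *)
Fixpoint count_below (sigma : nat -> nat) (N : nat) (z : Z) : nat :=
  match N with
  | O => 0%nat
  | S n => (count_below sigma n z +
            (if Z_lt_dec (Z.of_nat (sigma (S n))) z then 1 else 0))%nat
  end.

Definition early_regime (A : R) (N : nat) (sigma : nat -> nat) : Prop :=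
  sum1N (fun j => INR (sigma j) ^ 2) N <= A * INR N /\
  sum1N (fun j => INR (sigma j)) N < INR N / 2.

(* attach_within N sigma i k z : probability that an explorer currently at
   height z (at some time n, with X_n, X_{n+1}, ... fresh i.i.d. uniform on G_N
   and fresh +-1 increments) stops at one of the times n, ..., n+k-1, and the
   pile it stops on is i.  Recursion: at the current time the explorer stops
   on pile i iff X_n = i and z <= sigma_i (prob 1/N * [z <= sigma_i]);
   it continues iff z > sigma_{X_n} (prob #{j : sigma_j < z}/N), and then
   moves to z+1 or z-1 with prob 1/2 each. *)
Fixpoint attach_within (N : nat) (sigma : nat -> nat) (i : nat) (k : nat) (z : Z)
  : R :=
  match k with
  | O => 0
  | S k' =>
      (if Z_le_dec z (Z.of_nat (sigma i)) then / INR N else 0)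
      + INR (count_below sigma N z) / INR N *
        ((attach_within N sigma i k' (z + 1)%Z + attach_within N sigma i k' (z - 1)%Z) / 2)
  end.

(* P(n* <= n-1 and X_{n*} = i | sigma), starting from Z_0 = max sigma + 1. *)
Definition attach_prob_upto (N : nat) (sigma : nat -> nat) (i : nat) (n : nat) : R :=
  attach_within N sigma i n (Z.of_nat (maxh sigma N) + 1)%Z.

(* P(explorer attaches to pile i | sigma) is the limit of attach_prob_upto as n -> oo
   (a nondecreasing bounded sequence). *)

From Stdlib Require Import Reals Lra Lia ZArith.
Open Scope R_scope.

(* The attachment probability of an explorer at height [z] is the increasing limit
   of the iterates of an averaging operator [T] (source [1/N] at heights
   [<= sigma_i], survival probability [#{j : sigma_j < z} / N]).  A function [g]
   vanishing at [0] and [H + 1] with [g <= T g] on [1..H] stays below the iterates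
   up to a geometrically decaying error, hence below the limit.  Such a barrier is
   glued from a parabola of height [~ sigma_i^2 / (A + 1)] just below [sigma_i]
   and, above it, the profile [exp (Phi z) * (H + 1 - z)], where the second
   difference of the potential [Phi] is four times the density [p z] of piles of
   height [>= z], so that [exp Phi] compensates the absorption by the other piles.
   The early regime gives [p z <= min (1/2, A / z^2)] and [Phi <= 4 A], so at the
   start height [max sigma + 1] the barrier is still [>= kappa A * sigma_i^2]. *)

Lemma sum1N_le (f g : nat -> R) (N : nat) :
  (forall j, (1 <= j <= N)%nat -> f j <= g j) -> sum1N f N <= sum1N g N.
Proof.
  induction N as [|n IH]; intros Hfg; simpl; [lra|].
  assert (sum1N f n <= sum1N g n) by (apply IH; intros; apply Hfg; lia).
  assert (f (S n) <= g (S n)) by (apply Hfg; lia).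
  lra.
Qed.

Lemma sum1N_ext (f g : nat -> R) (N : nat) :
  (forall j, (1 <= j <= N)%nat -> f j = g j) -> sum1N f N = sum1N g N.
Proof.
  intros Hfg; apply Rle_antisym; apply sum1N_le; intros j Hj; rewrite (Hfg j Hj); lra.
Qed.

Lemma sum1N_eq0 (f : nat -> R) (N : nat) :
  (forall j, (1 <= j <= N)%nat -> f j = 0) -> sum1N f N = 0.
Proof.
  induction N as [|n IH]; intros Hf; simpl; [reflexivity|].
  rewrite IH, Hf; [ring | lia | intros; apply Hf; lia].
Qed.

Lemma sum1N_lincomb (a b c : R) (f g h : nat -> R) (N : nat) :
  a * sum1N f N + b * sum1N g N + c * sum1N h N =
  sum1N (fun j => a * f j + b * g j + c * h j) N.
Proof. induction N as [|n IH]; simpl; [ring|]. rewrite <- IH; ring. Qed.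

Lemma maxh_ge (sigma : nat -> nat) (N j : nat) :
  (1 <= j <= N)%nat -> (sigma j <= maxh sigma N)%nat.
Proof.
  induction N as [|n IH]; intros Hj; simpl; [lia|].
  destruct (Nat.eq_dec j (S n)) as [->|Hne]; [lia|].
  specialize (IH ltac:(lia)); lia.
Qed.

Lemma count_below_le (sigma : nat -> nat) (N : nat) (z : Z) :
  (count_below sigma N z <= N)%nat.
Proof. induction N as [|n IH]; simpl; [lia|]. destruct Z_lt_dec; lia. Qed.

Lemma count_below_lt (sigma : nat -> nat) (N i : nat) (z : Z) :
  (1 <= i <= N)%nat -> (z <= Z.of_nat (sigma i))%Z -> (count_below sigma N z < N)%nat.
Proof.
  induction N as [|n IH]; intros Hi Hz; simpl; [lia|].
  destruct (Nat.eq_dec i (S n)) as [->|Hne].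
  - pose proof (count_below_le sigma n z). destruct Z_lt_dec; lia.
  - specialize (IH ltac:(lia) Hz). destruct Z_lt_dec; lia.
Qed.

Lemma count_below_complement (sigma : nat -> nat) (N : nat) (z : Z) :
  INR N - INR (count_below sigma N z) =
  sum1N (fun j => if Z_le_dec z (Z.of_nat (sigma j)) then 1 else 0) N.
Proof.
  induction N as [|n IH]; simpl count_below; simpl sum1N; [simpl; lra|].
  rewrite plus_INR, S_INR, <- IH.
  destruct Z_lt_dec, Z_le_dec; simpl; lia || lra.
Qed.

Lemma sum1N_markov (f : R -> R) (sigma : nat -> nat) (N : nat) (z : Z) :
  (0 <= z)%Z -> (forall x y, 0 <= x <= y -> 0 <= f x <= f y) ->
  sum1N (fun j => if Z_le_dec z (Z.of_nat (sigma j)) then 1 else 0) N * f (IZR z)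
  <= sum1N (fun j => f (INR (sigma j))) N.
Proof.
  intros Hz Hf.
  assert (Hz' : 0 <= IZR z) by (apply IZR_le; exact Hz).
  induction N as [|n IH]; simpl; [lra|].
  rewrite Rmult_plus_distr_r.
  rewrite INR_IZR_INZ.
  destruct Z_le_dec as [Hle|Hlt].
  - apply IZR_le in Hle. specialize (Hf (IZR z) _ (conj Hz' Hle)). lra.
  - assert (Hs : 0 <= IZR (Z.of_nat (sigma (S n)))) by (apply IZR_le; lia).
    specialize (Hf _ _ (conj Hs (Rle_refl _))). lra.
Qed.

Lemma exp_le_compat (x y : R) : x <= y -> exp x <= exp y.
Proof. intros [Hlt | ->]; [left; apply exp_increasing, Hlt | lra]. Qed.

Lemma exp_linear_avg_ge (x y0 y1 l : R) :
  1 <= l -> y1 <= x -> x <= y0 ->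
  exp x * l * (2 + (y1 - x) + (y0 - x)) <= exp y1 * (l - 1) + exp y0 * (l + 1).
Proof.
  intros Hl H1 H0.
  assert (E : forall y, exp x * (1 + (y - x)) <= exp y).
  { intros y. replace (exp y) with (exp x * exp (y - x)) by (rewrite <- exp_plus; f_equal; ring).
    apply Rmult_le_compat_l; [left; apply exp_pos | apply exp_ineq1_le]. }
  pose proof (E y1). pose proof (E y0). pose proof (exp_pos x).
  assert (exp x * (1 + (y1 - x)) * (l - 1) <= exp y1 * (l - 1)) by (apply Rmult_le_compat_r; lra).
  assert (exp x * (1 + (y0 - x)) * (l + 1) <= exp y0 * (l + 1)) by (apply Rmult_le_compat_r; lra).
  assert (0 <= exp x * ((y0 - x) - (y1 - x))) by (apply Rmult_le_pos; lra).
  nra.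
Qed.

Lemma nonpos_of_le_geometric (c D x : R) :
  0 <= x < 1 -> (forall k, c <= D * x ^ k) -> c <= 0.
Proof.
  intros Hx Hc. destruct (Rle_dec c 0) as [|Hpos]; [assumption|]. exfalso.
  apply Rnot_le_lt in Hpos.
  assert (HD : 0 < D) by (specialize (Hc O); simpl in Hc; lra).
  destruct (pow_lt_1_zero x ltac:(rewrite Rabs_right; lra) (c / D)) as [k Hk].
  { unfold Rdiv; apply Rmult_lt_0_compat; [lra | apply Rinv_0_lt_compat; lra]. }
  specialize (Hk k (le_n k)). rewrite Rabs_right in Hk by (apply Rle_ge, pow_le; lra).
  specialize (Hc k).
  apply (Rmult_lt_compat_l D) in Hk; [|lra].
  replace (D * (c / D)) with c in Hk by (field; lra).
  lra.
Qed.

Definition step (s q u : Z -> R) (z : Z) : R :=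
  s z + q z * ((u (z + 1)%Z + u (z - 1)%Z) / 2).

Lemma step_mono (s q u v : Z -> R) (z : Z) :
  0 <= q z -> u (z + 1)%Z <= v (z + 1)%Z -> u (z - 1)%Z <= v (z - 1)%Z ->
  step s q u z <= step s q v z.
Proof.
  intros Hq H1 H2. unfold step.
  apply Rplus_le_compat_l, Rmult_le_compat_l; lra.
Qed.

Section Iterates.

Variables (s q : Z -> R) (a : nat -> Z -> R).
Hypothesis a_0 : forall z, a O z = 0.
Hypothesis a_S : forall k z, a (S k) z = step s q (a k) z.
Hypothesis s_nonneg : forall z, 0 <= s z.
Hypothesis q_nonneg : forall z, 0 <= q z.
Hypothesis s_q_le1 : forall z, s z + q z <= 1.

Lemma iterate_nonneg k z : 0 <= a k z.
Proof.
  revert z; induction k as [|k IH]; intros z; [rewrite a_0; lra|].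
  rewrite a_S. unfold step.
  pose proof (IH (z + 1)%Z). pose proof (IH (z - 1)%Z). pose proof (s_nonneg z).
  pose proof (q_nonneg z). nra.
Qed.

Lemma iterate_le1 k z : a k z <= 1.
Proof.
  revert z; induction k as [|k IH]; intros z; [rewrite a_0; lra|].
  rewrite a_S. unfold step.
  pose proof (IH (z + 1)%Z). pose proof (IH (z - 1)%Z). pose proof (s_q_le1 z).
  pose proof (q_nonneg z). nra.
Qed.

Lemma iterate_mono k z : a k z <= a (S k) z.
Proof.
  revert z; induction k as [|k IH]; intros z.
  - rewrite a_0. apply iterate_nonneg.
  - rewrite (a_S k), (a_S (S k)). apply step_mono; auto.
Qed.

Lemma iterate_cv z : exists p, Un_cv (fun k => a k z) p.
Proof.
  destruct (growing_cv (fun k => a k z)) as [p Hp].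
  - intros k. apply iterate_mono.
  - exists 1. intros x [k ->]. apply iterate_le1.
  - exists p; exact Hp.
Qed.

Variables (g : Z -> R) (H : Z) (B : R).
Hypothesis g_sub : forall z, (1 <= z <= H)%Z -> g z <= step s q g z.
Hypothesis g_0 : g 0%Z <= 0.
Hypothesis g_H : g (H + 1)%Z <= 0.
Hypothesis g_le : forall z, (1 <= z <= H)%Z -> g z <= B.
Hypothesis B_nonneg : 0 <= B.

(* A weight whose average over the two neighbours drops by exactly 1; it turns the
   gap between [g] and the iterates into a geometrically decaying error. *)
Definition weight (z : Z) : R := IZR z * (IZR H + 1 - IZR z) + 1.

Definition contraction : R := 1 - / ((IZR H + 1) ^ 2 + 1).

Lemma weight_bounds z : (0 <= z <= H + 1)%Z -> 1 <= weight z <= (IZR H + 1) ^ 2 + 1.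
Proof.
  intros Hz. unfold weight.
  assert (0 <= IZR z) by (apply IZR_le; lia).
  assert (IZR z <= IZR H + 1) by (rewrite <- plus_IZR; apply IZR_le; lia).
  split; nra.
Qed.

Lemma contraction_range : 0 <= contraction < 1.
Proof.
  unfold contraction.
  assert (1 <= (IZR H + 1) ^ 2 + 1) by (pose proof (pow2_ge_0 (IZR H + 1)); lra).
  assert (0 < / ((IZR H + 1) ^ 2 + 1)) by (apply Rinv_0_lt_compat; lra).
  assert (/ ((IZR H + 1) ^ 2 + 1) <= 1) by (rewrite <- Rinv_1; apply Rinv_le_contravar; lra).
  lra.
Qed.

Lemma weight_decay z : (1 <= z <= H)%Z ->
  q z * ((weight (z + 1) + weight (z - 1)) / 2) <= contraction * weight z.
Proof.
  intros Hz.
  assert (Havg : (weight (z + 1) + weight (z - 1)) / 2 = weight z - 1)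
    by (unfold weight; rewrite plus_IZR, minus_IZR; field).
  rewrite Havg. destruct (weight_bounds z ltac:(lia)) as [Hw1 Hw2].
  assert (Hq : q z <= 1) by (pose proof (s_q_le1 z); pose proof (s_nonneg z); lra).
  assert (Hfrac : weight z * / ((IZR H + 1) ^ 2 + 1) <= 1).
  { apply (Rmult_le_reg_r ((IZR H + 1) ^ 2 + 1)); [lra|].
    rewrite Rmult_assoc, Rinv_l; lra. }
  pose proof (q_nonneg z). unfold contraction. nra.
Qed.

Lemma error_nonneg k z : (0 <= z <= H + 1)%Z -> 0 <= B * contraction ^ k * weight z.
Proof.
  intros Hz. pose proof (weight_bounds z Hz). pose proof contraction_range.
  apply Rmult_le_pos; [apply Rmult_le_pos; [|apply pow_le]|]; lra.
Qed.

Lemma subsolution_le_iterate k : forall z, (0 <= z <= H + 1)%Z ->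
  g z - B * contraction ^ k * weight z <= a k z.
Proof.
  induction k as [|k IH]; intros z Hz.
  - pose proof (error_nonneg O z Hz). pose proof (iterate_nonneg O z).
    destruct (Z.eq_dec z 0) as [->|Hz0]; [lra|].
    destruct (Z.eq_dec z (H + 1)) as [->|HzH]; [lra|].
    pose proof (weight_bounds z Hz). specialize (g_le z ltac:(lia)).
    rewrite a_0. simpl. nra.
  - pose proof (error_nonneg (S k) z Hz). pose proof (iterate_nonneg (S k) z).
    destruct (Z.eq_dec z 0) as [->|Hz0]; [lra|].
    destruct (Z.eq_dec z (H + 1)) as [->|HzH]; [lra|].
    pose proof (IH (z + 1)%Z ltac:(lia)). pose proof (IH (z - 1)%Z ltac:(lia)).
    pose proof (g_sub z ltac:(lia)) as Hg. pose proof (weight_decay z ltac:(lia)) as Hd.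
    pose proof (q_nonneg z). pose proof contraction_range.
    assert (Hpow : 0 <= B * contraction ^ k) by (apply Rmult_le_pos; [|apply pow_le]; lra).
    rewrite a_S. unfold step in *.
    assert (q z * ((g (z + 1)%Z + g (z - 1)%Z) / 2)
      - B * contraction ^ k * (q z * ((weight (z + 1) + weight (z - 1)) / 2))
      <= q z * ((a k (z + 1)%Z + a k (z - 1)%Z) / 2)) by nra.
    assert (B * contraction ^ k * (q z * ((weight (z + 1) + weight (z - 1)) / 2))
      <= B * contraction ^ k * (contraction * weight z)) by (apply Rmult_le_compat_l; lra).
    simpl. lra.
Qed.

Lemma subsolution_le_limit z p : (1 <= z <= H)%Z -> Un_cv (fun k => a k z) p -> g z <= p.
Proof.
  intros Hz Hp.
  assert (Hgrow : Un_growing (fun k => a k z)) by (intros k; apply iterate_mono).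
  enough (g z - p <= 0) by lra.
  apply (nonpos_of_le_geometric _ (B * weight z) contraction contraction_range).
  intros k. pose proof (growing_ineq _ _ Hgrow Hp k).
  pose proof (subsolution_le_iterate k z ltac:(lia)). simpl in *. nra.
Qed.

End Iterates.

Definition kappa (A : R) : R := / (64 * (A + 1) * exp (4 * A)).

Section Barrier.

Variables (p Phi : Z -> R) (A : R) (h M : Z).
Hypothesis h_range : (1 <= h <= M)%Z.
Hypothesis p_nonneg : forall z, 0 <= p z.
Hypothesis p_le_half : forall z, (1 <= z)%Z -> p z <= 1 / 2.
Hypothesis p_sq_le : forall z, (1 <= z)%Z -> p z * IZR z ^ 2 <= A.
Hypothesis Phi_laplacian : forall z, Phi (z + 1) + Phi (z - 1) - 2 * Phi z = 4 * p z.
Hypothesis Phi_succ_le : forall z, Phi (z + 1) <= Phi z.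
Hypothesis Phi_le : forall z, (1 <= z)%Z -> Phi z <= 4 * A.
Hypothesis Phi_top : Phi (M + 1) = 0.

Definition indicator_le (z : Z) : R := if Z_le_dec z h then 1 else 0.

(* [N] times the one-step operator of [attach_within] when [h] is the height of the
   target pile and [p] the density of piles reaching the current height. *)
Definition rescaled_step : (Z -> R) -> Z -> R := step indicator_le (fun z => 1 - p z).

Definition bump_curvature : R := / (2 * (A + 1)).
Definition bump_radius : Z := (h + 3) / 4.
Definition bump_center : Z := h + 1 - bump_radius.
Definition bump_height : R := bump_curvature * IZR bump_radius ^ 2.
Definition bump (z : Z) : R :=
  bump_curvature * (IZR bump_radius ^ 2 - (IZR z - IZR bump_center) ^ 2).

Definition top : Z := 2 * M + 2.
Definition tail_scale : R :=
  bump_height / (exp (Phi bump_center) * (IZR top + 1 - IZR bump_center)).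
Definition tail (z : Z) : R :=
  if Z_le_dec bump_center z then tail_scale * exp (Phi z) * (IZR top + 1 - IZR z) else 0.

Definition barrier (z : Z) : R := Rmax 0 (Rmax (bump z) (tail z)).

Lemma A_nonneg : 0 <= A.
Proof. pose proof (p_sq_le 1 ltac:(lia)). pose proof (p_nonneg 1). simpl in *. nra. Qed.

Lemma bump_curvature_spec : 0 < bump_curvature /\ bump_curvature * (A + 1) = 1 / 2.
Proof.
  pose proof A_nonneg. unfold bump_curvature.
  split; [apply Rinv_0_lt_compat; lra | field; lra].
Qed.

Lemma bump_radius_spec : (4 * bump_radius <= h + 3 /\ h <= 4 * bump_radius)%Z.
Proof. unfold bump_radius. Z.div_mod_to_equations. lia. Qed.

Lemma bump_height_pos : 0 < bump_height.
Proof.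
  pose proof bump_curvature_spec. pose proof bump_radius_spec.
  assert (1 <= IZR bump_radius) by (apply IZR_le; lia).
  assert (1 <= IZR bump_radius ^ 2) by nra.
  unfold bump_height. nra.
Qed.

Lemma bump_le_height z : bump z <= bump_height.
Proof.
  pose proof bump_curvature_spec. pose proof (pow2_ge_0 (IZR z - IZR bump_center)).
  unfold bump, bump_height. nra.
Qed.

Lemma bump_center_eq : bump bump_center = bump_height.
Proof. unfold bump, bump_height. ring. Qed.

Lemma bump_avg z : (bump (z + 1) + bump (z - 1)) / 2 = bump z - bump_curvature.
Proof. unfold bump. rewrite plus_IZR, minus_IZR. field. Qed.

Lemma bump_nonpos_outside z :
  (z <= bump_center - bump_radius \/ bump_center + bump_radius <= z)%Z -> bump z <= 0.
Proof.
  intros Hz. pose proof bump_curvature_spec. pose proof bump_radius_spec.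
  assert (0 <= IZR bump_radius) by (apply IZR_le; lia).
  assert (IZR bump_radius ^ 2 <= (IZR z - IZR bump_center) ^ 2).
  { destruct Hz as [Hz|Hz]; apply IZR_le in Hz; rewrite ?minus_IZR, ?plus_IZR in Hz; nra. }
  unfold bump. nra.
Qed.

(* Where the bump is positive the explorer is at most at height [h] and the
   piles of height [>= z] have density [p z <= A / z^2 <= A / bump_radius^2]. *)
Lemma bump_sub z : (1 <= z)%Z -> 0 < bump z -> bump z <= rescaled_step bump z.
Proof.
  intros Hz Hpos.
  assert (Hin : (bump_center - bump_radius < z < bump_center + bump_radius)%Z).
  { destruct (Z_lt_le_dec (bump_center - bump_radius) z);
      [destruct (Z_lt_le_dec z (bump_center + bump_radius))|]; auto;
      exfalso; pose proof (bump_nonpos_outside z ltac:(lia)); lra. }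
  pose proof bump_radius_spec. pose proof bump_curvature_spec.
  unfold rescaled_step, step. rewrite bump_avg.
  unfold indicator_le. destruct Z_le_dec; [|unfold bump_center in Hin; lia].
  assert (Hr : 0 <= IZR bump_radius <= IZR z)
    by (split; apply IZR_le; unfold bump_center in Hin; lia).
  assert (HpA : p z * IZR bump_radius ^ 2 <= A).
  { pose proof (p_sq_le z Hz). pose proof (p_nonneg z).
    assert (IZR bump_radius ^ 2 <= IZR z ^ 2) by nra. nra. }
  pose proof (bump_le_height z). pose proof (p_nonneg z). pose proof (p_le_half z Hz).
  assert (p z * bump z <= bump_curvature * A) by (unfold bump_height in *; nra).
  nra.
Qed.

Lemma Phi_antitone z y : (z <= y)%Z -> Phi y <= Phi z.
Proof.
  intros Hzy. replace y with (z + Z.of_nat (Z.to_nat (y - z)))%Z by lia.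
  induction (Z.to_nat (y - z)) as [|n IH]; [rewrite Z.add_0_r; lra|].
  rewrite Nat2Z.inj_succ, Z.add_succ_r. unfold Z.succ.
  pose proof (Phi_succ_le (z + Z.of_nat n)). lra.
Qed.

Lemma bump_center_range : (1 <= bump_center <= h)%Z.
Proof. pose proof bump_radius_spec. unfold bump_center. lia. Qed.

Lemma tail_scale_pos : 0 < tail_scale.
Proof.
  pose proof bump_height_pos. pose proof bump_center_range. pose proof (exp_pos (Phi bump_center)).
  assert (0 < IZR top + 1 - IZR bump_center)
    by (rewrite <- plus_IZR, <- minus_IZR; apply IZR_lt; unfold top; lia).
  unfold tail_scale, Rdiv. apply Rmult_lt_0_compat; [lra|].
  apply Rinv_0_lt_compat, Rmult_lt_0_compat; lra.
Qed.

Lemma tail_center : tail bump_center = bump_height.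
Proof.
  pose proof (exp_pos (Phi bump_center)). pose proof bump_center_range.
  assert (0 < IZR top + 1 - IZR bump_center)
    by (rewrite <- plus_IZR, <- minus_IZR; apply IZR_lt; unfold top; lia).
  unfold tail, tail_scale. destruct Z_le_dec; [|lia]. field. lra.
Qed.

(* Above the bump, [exp Phi] compensates the absorption rate [p]: the second
   difference of [Phi] is [4 p] and [exp] lies above its tangents. *)
Lemma tail_avg_ge z : (bump_center < z <= top)%Z ->
  (1 + 2 * p z) * tail z <= (tail (z + 1) + tail (z - 1)) / 2.
Proof.
  intros Hz. unfold tail.
  do 3 (destruct Z_le_dec; [|lia]).
  rewrite plus_IZR, minus_IZR.
  set (len := IZR top + 1 - IZR z).
  assert (Hl : 1 <= len) by (unfold len; rewrite <- plus_IZR, <- minus_IZR; apply IZR_le; lia).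
  assert (Hdown : Phi z <= Phi (z - 1)) by (apply Phi_antitone; lia).
  pose proof (exp_linear_avg_ge (Phi z) (Phi (z - 1)) (Phi (z + 1)) len Hl
    (Phi_succ_le z) Hdown) as Havg.
  replace (2 + (Phi (z + 1) - Phi z) + (Phi (z - 1) - Phi z)) with (2 + 4 * p z)
    in Havg by (rewrite <- Phi_laplacian; ring).
  replace (IZR top + 1 - (IZR z + 1)) with (len - 1) by (unfold len; ring).
  replace (IZR top + 1 - (IZR z - 1)) with (len + 1) by (unfold len; ring).
  pose proof tail_scale_pos.
  assert (tail_scale * (exp (Phi z) * len * (2 + 4 * p z)) <=
    tail_scale * (exp (Phi (z + 1)) * (len - 1) + exp (Phi (z - 1)) * (len + 1)))
    by (apply Rmult_le_compat_l; lra).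
  lra.
Qed.

Lemma tail_sub z : (bump_center < z <= top)%Z -> tail z <= rescaled_step tail z.
Proof.
  intros Hz. pose proof (tail_avg_ge z Hz) as Havg.
  pose proof bump_center_range.
  pose proof (p_nonneg z). pose proof (p_le_half z ltac:(lia)).
  assert (Htail : 0 <= tail z).
  { unfold tail. destruct Z_le_dec; [|lra].
    pose proof tail_scale_pos. pose proof (exp_pos (Phi z)).
    assert (0 <= IZR top + 1 - IZR z) by (rewrite <- plus_IZR, <- minus_IZR; apply IZR_le; lia).
    apply Rmult_le_pos; [apply Rmult_le_pos|]; lra. }
  assert (0 <= indicator_le z) by (unfold indicator_le; destruct Z_le_dec; lra).
  assert (Hgain : tail z <= (1 - p z) * ((1 + 2 * p z) * tail z)).
  { assert (0 <= p z * (1 - 2 * p z) * tail z) by (apply Rmult_le_pos; [apply Rmult_le_pos|]; lra).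
    nra. }
  assert ((1 - p z) * ((1 + 2 * p z) * tail z) <= (1 - p z) * ((tail (z + 1) + tail (z - 1)) / 2))
    by (apply Rmult_le_compat_l; lra).
  unfold rescaled_step, step. lra.
Qed.


Lemma barrier_ge_bump z : bump z <= barrier z.
Proof. unfold barrier. eapply Rle_trans; [apply Rmax_l | apply Rmax_r]. Qed.

Lemma barrier_ge_tail z : tail z <= barrier z.
Proof. unfold barrier. eapply Rle_trans; [apply Rmax_r | apply Rmax_r]. Qed.

Lemma barrier_nonneg z : 0 <= barrier z.
Proof. apply Rmax_l. Qed.

Lemma barrier_sub z : (1 <= z <= top)%Z -> barrier z <= rescaled_step barrier z.
Proof.
  intros Hz. pose proof (p_le_half z ltac:(lia)).
  assert (Hbump : forall y, (1 <= y)%Z -> 0 < bump y -> bump y <= rescaled_step barrier y).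
  { intros y Hy Hpos. eapply Rle_trans; [apply bump_sub; auto|].
    apply step_mono; [pose proof (p_le_half y Hy); lra | apply barrier_ge_bump ..]. }
  assert (Hnonneg : 0 <= rescaled_step barrier z).
  { unfold rescaled_step, step, indicator_le.
    pose proof (barrier_nonneg (z + 1)). pose proof (barrier_nonneg (z - 1)).
    destruct Z_le_dec; apply Rplus_le_le_0_compat; try lra; apply Rmult_le_pos; lra. }
  unfold barrier at 1. repeat apply Rmax_lub; [exact Hnonneg| |].
  - destruct (Rle_lt_dec (bump z) 0) as [Hneg|Hpos]; [lra | apply Hbump; [lia | exact Hpos]].
  - pose proof bump_center_range.
    destruct (Z_lt_le_dec bump_center z) as [Hc|Hc].
    + eapply Rle_trans; [apply tail_sub; lia|].
      apply step_mono; [lra | apply barrier_ge_tail ..].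
    + destruct (Z.eq_dec z bump_center) as [->|Hne].
      * rewrite tail_center, <- bump_center_eq. apply Hbump; [lia|].
        rewrite bump_center_eq. apply bump_height_pos.
      * unfold tail. destruct Z_le_dec; [lia | exact Hnonneg].
Qed.

Lemma barrier_at_0 : barrier 0 = 0.
Proof.
  pose proof bump_radius_spec. pose proof bump_center_range.
  assert (Htail : tail 0 = 0) by (unfold tail; destruct Z_le_dec; [lia | reflexivity]).
  assert (Hbump : bump 0 <= 0) by (apply bump_nonpos_outside; unfold bump_center; lia).
  unfold barrier. rewrite Htail, (Rmax_right (bump _)) by lra. apply Rmax_left; lra.
Qed.

Lemma barrier_above_top : barrier (top + 1) = 0.
Proof.
  pose proof bump_radius_spec. pose proof bump_center_range.
  assert (Htail : tail (top + 1) = 0)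
    by (unfold tail; destruct Z_le_dec; [rewrite plus_IZR; ring | reflexivity]).
  assert (Hbump : bump (top + 1) <= 0)
    by (apply bump_nonpos_outside; unfold bump_center, top; lia).
  unfold barrier. rewrite Htail, (Rmax_right (bump _)) by lra. apply Rmax_left; lra.
Qed.

Lemma barrier_le_height z : (z <= top + 1)%Z -> barrier z <= bump_height.
Proof.
  intros Hz. pose proof bump_height_pos.
  unfold barrier. repeat apply Rmax_lub; [lra | apply bump_le_height|].
  unfold tail at 1. destruct (Z_le_dec bump_center z) as [Hc|Hc]; [|lra].
  rewrite <- tail_center. unfold tail. destruct Z_le_dec; [|lia].
  pose proof tail_scale_pos. pose proof (exp_pos (Phi z)).
  assert (exp (Phi z) <= exp (Phi bump_center)) by (apply exp_le_compat, Phi_antitone, Hc).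
  assert (0 <= IZR top + 1 - IZR z) by (rewrite <- plus_IZR, <- minus_IZR; apply IZR_le; lia).
  assert (IZR top + 1 - IZR z <= IZR top + 1 - IZR bump_center) by (apply IZR_le in Hc; lra).
  apply Rmult_le_compat; try apply Rmult_le_pos; try apply Rmult_le_compat_l; lra.
Qed.

Lemma bump_height_ge : IZR h ^ 2 / (32 * (A + 1)) <= bump_height.
Proof.
  pose proof bump_radius_spec. pose proof A_nonneg. pose proof bump_curvature_spec as [Hc _].
  assert (Hh : 0 <= IZR h <= 4 * IZR bump_radius)
    by (split; [apply IZR_le; lia | rewrite <- mult_IZR; apply IZR_le; lia]).
  unfold bump_height.
  replace (IZR h ^ 2 / (32 * (A + 1))) with (bump_curvature * (IZR h ^ 2 / 16))
    by (unfold bump_curvature; field; lra).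
  apply Rmult_le_compat_l; nra.
Qed.

(* [top = 2 M + 2] is far enough above the start height [M + 1] that the linear
   factor of [tail] loses at most a factor 2 there. *)
Lemma barrier_at_start : kappa A * IZR h ^ 2 <= barrier (M + 1).
Proof.
  eapply Rle_trans; [|apply barrier_ge_tail].
  pose proof bump_radius_spec. pose proof bump_center_range. pose proof A_nonneg.
  pose proof bump_curvature_spec as [Hc Hc'].
  unfold tail. destruct Z_le_dec; [|lia]. rewrite Phi_top, exp_0, Rmult_1_r.
  pose proof (exp_pos (4 * A)). pose proof (exp_pos (Phi bump_center)).
  assert (HPhi : exp (Phi bump_center) <= exp (4 * A)) by (apply exp_le_compat, Phi_le; lia).
  assert (HM : 1 <= IZR bump_center <= IZR M) by (split; apply IZR_le; lia).
  pose proof bump_height_ge as Hheight.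
  set (X := IZR top + 1 - IZR (M + 1)). set (D := IZR top + 1 - IZR bump_center).
  assert (HX : X = IZR M + 2) by (unfold X, top; rewrite !plus_IZR, mult_IZR; simpl; ring).
  assert (HD : 0 < D <= 2 * X)
    by (unfold D; rewrite HX; unfold top; rewrite !plus_IZR, mult_IZR; simpl; lra).
  assert (Hratio : / (2 * exp (4 * A)) <= X / (exp (Phi bump_center) * D)).
  { assert (Hden : exp (Phi bump_center) * D <= 2 * exp (4 * A) * X).
    { replace (2 * exp (4 * A) * X) with (exp (4 * A) * (2 * X)) by ring.
      apply Rmult_le_compat; lra. }
    replace (/ (2 * exp (4 * A))) with (X / (2 * exp (4 * A) * X)) by (field; lra).
    unfold Rdiv. apply Rmult_le_compat_l; [lra|].
    apply Rinv_le_contravar; [apply Rmult_lt_0_compat|]; lra. }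
  unfold tail_scale, kappa. fold D.
  replace (/ (64 * (A + 1) * exp (4 * A)) * IZR h ^ 2)
    with (IZR h ^ 2 / (32 * (A + 1)) * / (2 * exp (4 * A))) by (field; lra).
  replace (bump_height / (exp (Phi bump_center) * D) * X)
    with (bump_height * (X / (exp (Phi bump_center) * D))) by (field; lra).
  apply Rmult_le_compat; try lra.
  - unfold Rdiv. apply Rmult_le_pos; [apply pow2_ge_0 | left; apply Rinv_0_lt_compat; lra].
  - left; apply Rinv_0_lt_compat; lra.
Qed.

End Barrier.

Definition triangular (n : Z) : R := if Z_le_dec n 0 then 0 else IZR n * (IZR n + 1) / 2.

Lemma triangular_laplacian n :
  triangular (n + 1) + triangular (n - 1) - 2 * triangular n = if Z_le_dec 0 n then 1 else 0.
Proof.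
  unfold triangular. rewrite plus_IZR, minus_IZR.
  destruct (Z_le_dec (n + 1) 0), (Z_le_dec (n - 1) 0), (Z_le_dec n 0), (Z_le_dec 0 n);
    try lia; try lra.
  - assert (n = 0)%Z as -> by lia. simpl. lra.
  - assert (n = 1)%Z as -> by lia. simpl. lra.
Qed.

Lemma triangular_le_succ n : triangular n <= triangular (n + 1).
Proof.
  unfold triangular. rewrite plus_IZR.
  destruct (Z_le_dec (n + 1) 0), (Z_le_dec n 0); try lia; try lra.
  - assert (0 <= IZR n) by (apply IZR_le; lia). nra.
  - assert (1 <= IZR n) by (apply IZR_le; lia). nra.
Qed.

Lemma triangular_le_sq n s : (n <= s)%Z -> (0 <= s)%Z -> triangular n <= IZR s ^ 2.
Proof.
  intros Hns Hs. unfold triangular. pose proof (pow2_ge_0 (IZR s)).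
  destruct Z_le_dec; [lra|].
  assert (1 <= IZR n <= IZR s) by (split; apply IZR_le; lia). nra.
Qed.

Definition density_ge (N : nat) (sigma : nat -> nat) (z : Z) : R :=
  1 - INR (count_below sigma N z) / INR N.

Section Deposition.

Variables (N : nat) (sigma : nat -> nat) (A : R).

Definition potential (z : Z) : R :=
  4 / INR N * sum1N (fun j => triangular (Z.of_nat (sigma j) - z)) N.

Lemma potential_top : potential (Z.of_nat (maxh sigma N) + 1) = 0.
Proof.
  unfold potential. rewrite sum1N_eq0; [ring|].
  intros j Hj. pose proof (maxh_ge sigma N j Hj).
  unfold triangular. destruct Z_le_dec; [reflexivity | lia].
Qed.

Hypothesis N_pos : (0 < N)%nat.

Lemma INR_N_pos : 0 < INR N.
Proof. apply lt_0_INR; lia. Qed.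

Lemma density_ge_nonneg z : 0 <= density_ge N sigma z.
Proof.
  pose proof INR_N_pos. pose proof (le_INR _ _ (count_below_le sigma N z)).
  unfold density_ge.
  enough (INR (count_below sigma N z) / INR N <= 1) by lra.
  apply (Rmult_le_reg_r (INR N)); [lra|]. unfold Rdiv. rewrite Rmult_assoc, Rinv_l; lra.
Qed.

Lemma density_ge_scaled z :
  density_ge N sigma z * INR N =
  sum1N (fun j => if Z_le_dec z (Z.of_nat (sigma j)) then 1 else 0) N.
Proof.
  pose proof INR_N_pos. rewrite <- count_below_complement. unfold density_ge. field. lra.
Qed.

Lemma potential_laplacian z :
  potential (z + 1) + potential (z - 1) - 2 * potential z = 4 * density_ge N sigma z.
Proof.
  pose proof INR_N_pos. unfold potential.
  replace (4 / INR N * sum1N (fun j => triangular (Z.of_nat (sigma j) - (z + 1))) N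
    + 4 / INR N * sum1N (fun j => triangular (Z.of_nat (sigma j) - (z - 1))) N
    - 2 * (4 / INR N * sum1N (fun j => triangular (Z.of_nat (sigma j) - z)) N))
    with (4 / INR N * (1 * sum1N (fun j => triangular (Z.of_nat (sigma j) - (z + 1))) N
      + 1 * sum1N (fun j => triangular (Z.of_nat (sigma j) - (z - 1))) N
      + -2 * sum1N (fun j => triangular (Z.of_nat (sigma j) - z)) N)) by ring.
  rewrite sum1N_lincomb.
  rewrite (sum1N_ext _ (fun j => if Z_le_dec z (Z.of_nat (sigma j)) then 1 else 0)).
  - rewrite <- density_ge_scaled. field. lra.
  - intros j _. pose proof (triangular_laplacian (Z.of_nat (sigma j) - z)) as Hlap.
    replace (Z.of_nat (sigma j) - z + 1)%Z with (Z.of_nat (sigma j) - (z - 1))%Z in Hlap by ring.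
    replace (Z.of_nat (sigma j) - z - 1)%Z with (Z.of_nat (sigma j) - (z + 1))%Z in Hlap by ring.
    destruct (Z_le_dec 0 _), (Z_le_dec z _); lia || lra.
Qed.

Lemma potential_succ_le z : potential (z + 1) <= potential z.
Proof.
  pose proof INR_N_pos. unfold potential.
  apply Rmult_le_compat_l.
  { unfold Rdiv. apply Rmult_le_pos; [lra | left; apply Rinv_0_lt_compat; lra]. }
  apply sum1N_le. intros j _.
  replace (Z.of_nat (sigma j) - z)%Z with (Z.of_nat (sigma j) - (z + 1) + 1)%Z by ring.
  apply triangular_le_succ.
Qed.



Hypothesis regime : early_regime A N sigma.

Lemma density_ge_sq_le z : (1 <= z)%Z -> density_ge N sigma z * IZR z ^ 2 <= A.
Proof.
  intros Hz. pose proof INR_N_pos. destruct regime as [Hsq _].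
  pose proof (sum1N_markov (fun x => x ^ 2) sigma N z ltac:(lia)) as Hm.
  rewrite <- density_ge_scaled in Hm.
  apply (Rmult_le_reg_r (INR N)); [lra|].
  apply Rle_trans with (2 := Hsq). eapply Rle_trans; [|apply Hm; intros; nra].
  right; ring.
Qed.

Lemma density_ge_le_half z : (1 <= z)%Z -> density_ge N sigma z <= 1 / 2.
Proof.
  intros Hz. pose proof INR_N_pos. destruct regime as [_ Hlin].
  pose proof (sum1N_markov (fun x => x) sigma N z ltac:(lia)) as Hm.
  rewrite <- density_ge_scaled in Hm.
  assert (1 <= IZR z) by (apply IZR_le; lia).
  pose proof (density_ge_nonneg z).
  apply (Rmult_le_reg_r (INR N)); [lra|].
  assert (density_ge N sigma z * INR N * 1 <= density_ge N sigma z * INR N * IZR z)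
    by (apply Rmult_le_compat_l; [apply Rmult_le_pos|]; lra).
  specialize (Hm ltac:(intros; lra)). lra.
Qed.

Lemma potential_le z : (0 <= z)%Z -> potential z <= 4 * A.
Proof.
  intros Hz. pose proof INR_N_pos. destruct regime as [Hsq _]. unfold potential.
  assert (Hsum : sum1N (fun j => triangular (Z.of_nat (sigma j) - z)) N
    <= sum1N (fun j => INR (sigma j) ^ 2) N).
  { apply sum1N_le. intros j _. rewrite INR_IZR_INZ. apply triangular_le_sq; lia. }
  apply (Rmult_le_reg_r (INR N)); [lra|].
  replace (4 / INR N * sum1N (fun j => triangular (Z.of_nat (sigma j) - z)) N * INR N)
    with (4 * sum1N (fun j => triangular (Z.of_nat (sigma j) - z)) N) by (field; lra).
  lra.
Qed.

End Deposition.

Section Attachment.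

Variables (N : nat) (sigma : nat -> nat) (i : nat).
Hypothesis i_range : (1 <= i <= N)%nat.

Definition attach_source (z : Z) : R := if Z_le_dec z (Z.of_nat (sigma i)) then / INR N else 0.

Definition survival (z : Z) : R := INR (count_below sigma N z) / INR N.

Lemma attach_within_S k z :
  attach_within N sigma i (S k) z = step attach_source survival (attach_within N sigma i k) z.
Proof. reflexivity. Qed.

Lemma attach_source_nonneg z : 0 <= attach_source z.
Proof.
  pose proof (INR_N_pos N ltac:(lia)). unfold attach_source.
  destruct Z_le_dec; [left; apply Rinv_0_lt_compat|]; lra.
Qed.

Lemma survival_nonneg z : 0 <= survival z.
Proof.
  pose proof (INR_N_pos N ltac:(lia)). pose proof (pos_INR (count_below sigma N z)).
  unfold survival, Rdiv. apply Rmult_le_pos; [lra | left; apply Rinv_0_lt_compat; lra].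
Qed.

Lemma attach_source_survival_le1 z : attach_source z + survival z <= 1.
Proof.
  pose proof (INR_N_pos N ltac:(lia)).
  assert (Hcount : INR (count_below sigma N z) + (if Z_le_dec z (Z.of_nat (sigma i)) then 1 else 0)
    <= INR N).
  { destruct Z_le_dec as [Hz|Hz].
    - pose proof (count_below_lt sigma N i z i_range Hz) as Hlt.
      apply le_INR in Hlt. rewrite S_INR in Hlt. lra.
    - pose proof (le_INR _ _ (count_below_le sigma N z)). lra. }
  unfold attach_source, survival.
  apply (Rmult_le_reg_r (INR N)); [lra|].
  destruct Z_le_dec; field_simplify; lra.
Qed.

Lemma attach_step_scaled (u : Z -> R) z :
  step attach_source survival (fun y => u y / INR N) z =
  rescaled_step (density_ge N sigma) (Z.of_nat (sigma i)) u z / INR N.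
Proof.
  pose proof (INR_N_pos N ltac:(lia)).
  unfold rescaled_step, step, attach_source, survival, density_ge, indicator_le.
  destruct Z_le_dec; field; lra.
Qed.

Lemma attach_cv : exists p, Un_cv (attach_prob_upto N sigma i) p.
Proof.
  exact (iterate_cv attach_source survival (attach_within N sigma i)
    (fun _ => eq_refl) attach_within_S attach_source_nonneg survival_nonneg
    attach_source_survival_le1 _).
Qed.

Lemma attach_limit_nonneg p : Un_cv (attach_prob_upto N sigma i) p -> 0 <= p.
Proof.
  intros Hp.
  pose proof (growing_ineq _ _ (fun k => iterate_mono attach_source survival
    (attach_within N sigma i) (fun _ => eq_refl) attach_within_S attach_source_nonneg
    survival_nonneg k _) Hp O).
  unfold attach_prob_upto in *. simpl in *. lra.
Qed.

Lemma barrier_le_attach_limit (A p : R) :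
  early_regime A N sigma -> (1 <= sigma i)%nat -> Un_cv (attach_prob_upto N sigma i) p ->
  barrier (potential N sigma) A (Z.of_nat (sigma i)) (Z.of_nat (maxh sigma N))
    (Z.of_nat (maxh sigma N) + 1) / INR N <= p.
Proof.
  intros Hreg Hsig Hp. set (M := Z.of_nat (maxh sigma N)).
  pose proof (INR_N_pos N ltac:(lia)) as HN.
  assert (Hh : (1 <= Z.of_nat (sigma i) <= M)%Z)
    by (pose proof (maxh_ge sigma N i i_range); unfold M; lia).
  pose proof (density_ge_nonneg N sigma ltac:(lia)) as Hd0.
  pose proof (density_ge_le_half N sigma A ltac:(lia) Hreg) as Hd1.
  pose proof (density_ge_sq_le N sigma A ltac:(lia) Hreg) as Hd2.
  pose proof (potential_laplacian N sigma ltac:(lia)) as HP0.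
  pose proof (potential_succ_le N sigma ltac:(lia)) as HP1.
  set (g z := barrier (potential N sigma) A (Z.of_nat (sigma i)) M z / INR N).
  apply (subsolution_le_limit attach_source survival (attach_within N sigma i)
    (fun _ => eq_refl) attach_within_S attach_source_nonneg survival_nonneg
    attach_source_survival_le1 g (top M) (bump_height A (Z.of_nat (sigma i)) / INR N)).
  - intros z Hz. unfold g. rewrite attach_step_scaled.
    apply Rmult_le_compat_r; [left; apply Rinv_0_lt_compat; lra|].
    exact (barrier_sub _ _ A _ M Hh Hd0 Hd1 Hd2 HP0 HP1 z Hz).
  - unfold g. rewrite (barrier_at_0 _ _ A _ M Hh Hd0 Hd2). lra.
  - unfold g. rewrite (barrier_above_top _ _ A _ M Hh Hd0 Hd2). lra.
  - intros z Hz. unfold g, Rdiv. apply Rmult_le_compat_r; [left; apply Rinv_0_lt_compat; lra|].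
    apply (barrier_le_height _ _ A _ M Hh Hd0 Hd2 HP1). lia.
  - pose proof (bump_height_pos _ A _ M Hh Hd0 Hd2).
    unfold Rdiv. apply Rmult_le_pos; [lra | left; apply Rinv_0_lt_compat; lra].
  - unfold top. lia.
  - exact Hp.
Qed.

Lemma attach_limit_ge (A p : R) :
  early_regime A N sigma -> Un_cv (attach_prob_upto N sigma i) p ->
  kappa A * INR (sigma i) ^ 2 / INR N <= p.
Proof.
  intros Hreg Hp.
  destruct (Nat.eq_dec (sigma i) 0) as [Hzero|Hpos].
  { rewrite Hzero. pose proof (attach_limit_nonneg p Hp). simpl. unfold Rdiv. lra. }
  pose proof (INR_N_pos N ltac:(lia)) as HN.
  pose proof (barrier_le_attach_limit A p Hreg ltac:(lia) Hp) as Hlim.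
  pose proof (barrier_at_start (density_ge N sigma) (potential N sigma) A (Z.of_nat (sigma i))
    (Z.of_nat (maxh sigma N)) ltac:(pose proof (maxh_ge sigma N i i_range); lia)
    (density_ge_nonneg N sigma ltac:(lia)) (density_ge_sq_le N sigma A ltac:(lia) Hreg)
    (fun z Hz => potential_le N sigma A ltac:(lia) Hreg z ltac:(lia))
    (potential_top N sigma)) as Hstart.
  rewrite INR_IZR_INZ. unfold Rdiv in *. apply Rle_trans with (2 := Hlim).
  apply Rmult_le_compat_r; [left; apply Rinv_0_lt_compat|]; lra.
Qed.

End Attachment.

Theorem corollary4p1 :
  forall A : R, 0 < A ->
  exists kappa : R, 0 < kappa /\
    forall (N : nat) (sigma : nat -> nat) (i : nat),
      (2 <= N)%nat ->
      early_regime A N sigma ->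
      (1 <= i <= N)%nat ->
      exists p : R,
        Un_cv (attach_prob_upto N sigma i) p /\
        p >= kappa * (INR (sigma i) ^ 2) / INR N.
Proof.
  intros A HA. exists (kappa A). split.
  { unfold kappa. pose proof (exp_pos (4 * A)).
    apply Rinv_0_lt_compat, Rmult_lt_0_compat; lra. }
  intros N sigma i _ Hreg Hi.
  destruct (attach_cv N sigma i Hi) as [p Hp].
  exists p. split; [exact Hp|].
  apply Rle_ge, (attach_limit_ge N sigma i Hi A p Hreg Hp).
Qed.
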